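(* Let $n,k,r$ be integers with $k,r\geq 2$, $n\geq 2k$ and $k<r$. Then every vertex-$k$-maximal $r$-uniform hypergraph $H$ on $n$ vertices satisfies $|E(H)|=\binom{n}{r}-\binom{n-k}{r}$.
   Context: Binomial coefficients satisfy $\binom{a}{b}=0$ when $b>a$. A hypergraph $H=(V,E)$ consists of a finite vertex set $V$ and a set $E$ of non-empty subsets of $V$ (edges); it is $r$-uniform if all edges have exactly $r$ elements. The complement $H^c$ has as edges the $r$-subsets of $V$ not in $E$. A subhypergraph is $H'=(V',E')$ with $V'\subseteq V$, $E'\subseteq E$. $H+e=(V,E\cup\{e\})$ for $e\in E(H^c)$. $H-Y$ is the hypergraph induced on $V\setminus Y$ (keeping edges contained in $V\setminus Y$). Connectedness is defined via paths (alternating sequences of distinct vertices and distinct edges with consecutive vertices in the intermediate edge). A vertex-cut is a set $X$ with $H-X$ disconnected. $\kappa(H)$ is the minimum size of a vertex-cut if one exists, and $|V(H)|-1$ otherwise. $\overline{\kappa}(H)=\max\{\kappa(H'): H'\subseteq H\}$. An $r$-uniform hypergraph $H$ is vertex-$k$-maximal if $\overline{\kappa}(H)\leq k$ but $\overline{\kappa}(H+e)\geq k+1$ for every $e\in E(H^c)$. *)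

From Stdlib Require Import ClassicalDescription.
From mathcomp Require Import all_boot.
Set Implicit Arguments. Unset Strict Implicit. Unset Printing Implicit Defensive.

Definition asbool (P : Prop) : bool :=
  if excluded_middle_informative P then true else false.

Section Hypergraphs.
Variable V : finType.

Definition hgraph := ({set V} * {set {set V}})%type.

Definition hverts (H : hgraph) : {set V} := H.1.
Definition hedges (H : hgraph) : {set {set V}} := H.2.

Definition is_hgraph (H : hgraph) : Prop :=
  forall e, e \in hedges H -> e != set0 /\ e \subset hverts H.

Definition uniform (r : nat) (H : hgraph) : Prop :=
  forall e, e \in hedges H -> #|e| = r.

Definition subhg (H' H : hgraph) : Prop :=
  [/\ is_hgraph H', hverts H' \subset hverts H & hedges H' \subset hedges H].

Definition add_edge (H : hgraph) (e : {set V}) : hgraph := (hverts H, e |: hedges H).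

Definition del_verts (H : hgraph) (Y : {set V}) : hgraph :=
  (hverts H :\: Y, [set e in hedges H | e \subset hverts H :\: Y]).

(* A path from u to v: distinct vertices u = x_0, x_1, ..., x_m = v and
   distinct edges e_1, ..., e_m of H with x_{i-1}, x_i in e_i. *)
Definition hpath (H : hgraph) (u v : V) : Prop :=
  exists (xs : seq V) (es : seq {set V}),
    [/\ size es = size xs, uniq (u :: xs), uniq es, last u xs = v &
        all (fun e => e \in hedges H) es] /\
        (forall i, i < size xs ->
          (nth u (u :: xs) i \in nth set0 es i) /\ (nth u xs i \in nth set0 es i)).

Definition connected (H : hgraph) : Prop :=
  forall u v, u \in hverts H -> v \in hverts H -> hpath H u v.

Definition vertex_cut (H : hgraph) (X : {set V}) : Prop :=
  X \subset hverts H /\ ~ connected (del_verts H X).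

(* kappa(H): minimum size of a vertex cut if one exists, |V(H)|-1 otherwise.
   (Every vertex cut has size <= |V(H)| - 2, so the default value does not
   interfere with the minimum.)  For the empty hypergraph |V|-1 is truncated
   to 0 in nat. *)
Definition kappa (H : hgraph) : nat :=
  \big[minn/#|hverts H|.-1]_(X : {set V} | asbool (vertex_cut H X)) #|X|.

Definition kappa_bar (H : hgraph) : nat :=
  \max_(H' : hgraph | asbool (subhg H' H)) kappa H'.

Definition vertex_k_maximal (r k : nat) (H : hgraph) : Prop :=
  kappa_bar H <= k /\
  forall e : {set V}, #|e| = r -> e \subset hverts H -> e \notin hedges H ->
    k.+1 <= kappa_bar (add_edge H e).

End Hypergraphs.

(* Induction on the number of vertices.  If fewer than [r] vertices lie outside
   some [k]-set, maximality forces [H] to be complete.  Otherwise a vertex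
   cut of at most [k] vertices, padded to exactly [k], splits the vertex set into
   [X], [P], [Q] with no edge meeting both [P] and [Q].  Both sides [X ∪ P] and
   [X ∪ Q] induce vertex-[k]-maximal hypergraphs, and maximality also forces
   every [r]-set meeting [X], [P] and [Q] to be an edge.  Counting the edges
   side by side then gives exactly the number of [r]-sets meeting [X], namely
   [C(n, r) - C(n - k, r)]. *)

From Stdlib Require Import Classical ClassicalDescription.
From mathcomp Require Import all_boot zify.
Set Implicit Arguments. Unset Strict Implicit. Unset Printing Implicit Defensive.

Lemma asboolP (P : Prop) : reflect P (asbool P).
Proof. by rewrite /asbool; case: excluded_middle_informative => h; constructor. Qed.

Lemma cardsU_disjoint (T : finType) (A B : {set T}) :
  [disjoint A & B] -> #|A :|: B| = #|A| + #|B|.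
Proof. by move=> dAB; rewrite cardsU (disjoint_setI0 dAB) cards0 subn0. Qed.

Section Connectivity.
Variable V : finType.
Implicit Types (H : hgraph V) (X : {set V}).

Lemma kappa_le_cut H X : vertex_cut H X -> kappa H <= #|X|.
Proof.
move=> /asboolP cutX; rewrite /kappa; have : X \in index_enum {set V} by rewrite mem_index_enum.
elim: (index_enum _) => [|Y s IHs] //; rewrite big_cons in_cons.
case/orP => [/eqP <-|/IHs le_s]; first by rewrite cutX geq_minl.
by case: ifP => // _; rewrite geq_min le_s orbT.
Qed.

Lemma kappa_le_card H : kappa H <= #|hverts H|.-1.
Proof. by rewrite /kappa; elim/big_rec: _ => // X m _ le_m; rewrite geq_min le_m orbT. Qed.

Lemma exists_small_cut H k :
  kappa H <= k -> k < #|hverts H|.-1 -> exists2 X, vertex_cut H X & #|X| <= k.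
Proof.
move=> le_k lt_k; apply: NNPP => no_cut; suff : k < kappa H by rewrite ltnNge le_k.
rewrite /kappa; elim/big_rec: _ => // X m /asboolP cutX lt_m.
by rewrite leq_min lt_m andbT ltnNge; apply/negP => le_X; apply: no_cut; exists X.
Qed.

Lemma kappa_le_bar H H' : subhg H' H -> kappa H' <= kappa_bar H.
Proof. by move=> subH'; rewrite /kappa_bar (leq_bigmax_cond H') //; apply/asboolP. Qed.

Lemma kappa_bar_gt_sub H k :
  k < kappa_bar H -> exists2 H', subhg H' H & k < kappa H'.
Proof.
move=> lt_k; apply: NNPP => no_sub; move: lt_k; rewrite ltnNge => /negP; apply.
apply/bigmax_leqP => H' /asboolP subH'; rewrite leqNgt; apply/negP => lt_H'.
by apply: no_sub; exists H'.
Qed.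

End Connectivity.

Section Paths.
Variable V : finType.
Implicit Types (H : hgraph V) (E : {set {set V}}) (S : {set V}).

Definition is_hpath E u (xs : seq V) (es : seq {set V}) : Prop :=
  [/\ size es = size xs, uniq (u :: xs), uniq es & all [in E] es] /\
  forall i, i < size xs -> nth u (u :: xs) i \in nth set0 es i /\ nth u xs i \in nth set0 es i.

Definition edge_closed E S : Prop :=
  forall f x y, f \in E -> x \in f -> y \in f -> x \in S -> y \in S.

Lemma hpathP H u v :
  hpath H u v <-> exists xs es, is_hpath (hedges H) u xs es /\ last u xs = v.
Proof.
split; first by case=> xs [es [[? ? ? ? ?] ?]]; exists xs, es.
by case=> xs [es [[[? ? ? ?] ?] ?]]; exists xs, es.
Qed.

Lemma hpath_refl H u : hpath H u u.
Proof. by exists [::], [::]. Qed.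

Lemma is_hpath_take E u xs es i : is_hpath E u xs es -> i <= size xs ->
  is_hpath E u (take i xs) (take i es) /\ last u (take i xs) = nth u (u :: xs) i.
Proof.
case=> [[size_es uniq_xs uniq_es es_E] steps] le_i.
have size_xs : size (take i xs) = i by rewrite size_takel.
have take_cons : u :: take i xs = take i.+1 (u :: xs) by [].
split; last by rewrite (last_nth u) take_cons nth_take size_xs.
split.
  split; rewrite ?size_xs ?size_takel ?size_es ?take_cons ?take_uniq //.
  by apply/allP => f /mem_take; apply: (allP es_E).
move=> j; rewrite size_xs => lt_j; have lt_j_xs := leq_trans lt_j le_i.
by rewrite take_cons !nth_take //; [apply: steps | apply: ltnW].
Qed.

Lemma is_hpath_rcons E u xs es y f :
  is_hpath E u xs es -> y \notin u :: xs -> f \notin es -> f \in E ->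
  last u xs \in f -> y \in f -> is_hpath E u (rcons xs y) (rcons es f).
Proof.
case=> [[size_es uniq_xs uniq_es es_E] steps] y_new f_new fE last_f yf.
split.
  by rewrite !size_rcons size_es -rcons_cons !rcons_uniq y_new f_new all_rcons fE.
move=> j; rewrite size_rcons ltnS leq_eqVlt -rcons_cons !nth_rcons /= ltnS size_es.
case/orP => [/eqP ->|lt_j]; first by rewrite leqnn ltnn eqxx -(last_nth u).
by rewrite (ltnW lt_j) lt_j; apply: steps.
Qed.

(* Cut the path at [y] if it already visits [y]; otherwise cut it where [f] is
   first used (if at all) and continue through [f] to [y]. *)
Lemma hpath_add H u x y f :
  hpath H u x -> f \in hedges H -> x \in f -> y \in f -> hpath H u y.
Proof.
move/hpathP=> [xs [es [p_xs last_x]]] fE xf yf; apply/hpathP.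
have [[size_es _ _ _] steps] := p_xs.
have [y_old|y_new] := boolP (y \in u :: xs).
  have le_y : index y (u :: xs) <= size xs by rewrite -ltnS index_mem.
  have [p_y last_y] := is_hpath_take p_xs le_y.
  by exists (take (index y (u :: xs)) xs), (take (index y (u :: xs)) es); rewrite last_y nth_index.
pose j := index f es.
have le_j : j <= size xs by rewrite -size_es index_size.
have [p_j last_j] := is_hpath_take p_xs le_j.
exists (rcons (take j xs) y), (rcons (take j es) f); split; last by rewrite last_rcons.
apply: is_hpath_rcons => //.
- by apply: contra y_new; rewrite !in_cons => /orP [-> // | /mem_take ->]; rewrite orbT.
- apply/negP => f_take.
  have : index f (take j es ++ drop j es) = index f (take j es) by rewrite index_cat f_take.
  rewrite cat_take_drop -/j => idx_f; have := index_mem f (take j es).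
  by rewrite f_take -idx_f size_takel ?size_es // ltnn.
- rewrite last_j; have [lt_j|] := ltnP j (size es).
    by have [+ _] := steps j (leq_trans lt_j (eq_leq size_es)); rewrite /j nth_index -?index_mem.
  move=> le_es; have -> : j = size xs by apply/eqP; rewrite eqn_leq le_j -size_es.
  by rewrite -(last_nth u) last_x.
Qed.

Lemma hpath_closed H S u v :
  edge_closed (hedges H) S -> u \in S -> hpath H u v -> v \in S.
Proof.
move=> closedS uS /hpathP [xs [es [[[size_es _ _ es_E] steps] <-]]].
rewrite (last_nth u); move: (leqnn (size xs)); elim: {-2}(size xs) => // i IHi lt_i.
have [xi_f xSi_f] := steps i lt_i.
apply: closedS xi_f xSi_f (IHi (ltnW lt_i)).
by apply: (allP es_E); apply: mem_nth; rewrite size_es.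
Qed.

End Paths.

Section Separators.
Variable V : finType.
Implicit Types (H : hgraph V) (X Y Z S P Q : {set V}).

Lemma kappa_le_closed H Y S u v :
  Y \subset hverts H -> u \in hverts H :\: Y -> v \in hverts H :\: Y ->
  u \in S -> v \notin S -> edge_closed (hedges (del_verts H Y)) S -> kappa H <= #|Y|.
Proof.
move=> sYH uHY vHY uS vS closedS; apply: kappa_le_cut; split=> // conn.
by move: vS; rewrite (hpath_closed closedS uS (conn u v uHY vHY)).
Qed.

Lemma kappa_le_separator H X P Q u v :
  [disjoint X & P] -> [disjoint X & Q] -> [disjoint P & Q] ->
  (forall f, f \in hedges H -> [disjoint f & X] -> f \subset P \/ f \subset Q) ->
  u \in hverts H -> u \in P -> v \in hverts H -> v \in Q -> kappa H <= #|X|.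
Proof.
move=> dXP dXQ dPQ sepH uH uP vH vQ.
apply: leq_trans (subset_leq_card (subsetIl X (hverts H))).
apply: (@kappa_le_closed _ _ P u v); rewrite ?subsetIr ?inE ?uH ?vH ?andbT //.
- by rewrite (disjointFl dXP uP).
- by rewrite (disjointFl dXQ vQ).
- by rewrite (disjointFl dPQ vQ).
move=> f x y; rewrite inE => /andP [fH fHX] xf yf xP.
have fX : [disjoint f & X].
  rewrite disjoints_subset; apply/subsetP => z zf; move: (subsetP fHX z zf).
  by rewrite !inE => /andP [+ zH]; rewrite zH andbT.
case: (sepH f fH fX) => [fP | fQ]; first exact: subsetP fP y yf.
by move: (disjointFr dPQ xP); rewrite (subsetP fQ x xf).
Qed.

Lemma kappa_le_edge_free H Z :
  Z \subset hverts H -> 1 < #|Z| -> (forall f, f \in hedges H -> ~~ (f \subset Z)) ->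
  kappa H <= #|hverts H| - #|Z|.
Proof.
move=> sZH /card_gt1P [u [v [uZ vZ uv]]] no_edge.
have HZ : hverts H :\: (hverts H :\: Z) = Z by rewrite setDDr setDv set0U; apply/setIidPr.
rewrite -cardsDS //; apply: (@kappa_le_closed _ _ [set u] u v); rewrite ?HZ ?subsetDl ?inE //.
  by rewrite eq_sym.
move=> f x y; rewrite /hedges /= HZ !inE => /andP [fH fZ].
by move: (no_edge f fH); rewrite fZ.
Qed.

End Separators.

Lemma exists_subset_card (T : finType) (A : {set T}) n :
  n <= #|A| -> exists2 B : {set T}, B \subset A & #|B| = n.
Proof.
case/card_geqP=> s [uniq_s size_s sA]; exists [set x in s].
  by apply/subsetP => x; rewrite inE => /sA.
by rewrite cardsE (card_uniqP uniq_s).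
Qed.

Section Families.
Variable V : finType.
Implicit Types (A B U X : {set V}) (F : {set {set V}}).

Definition induced F U := [set f in F | f \subset U].

Definition crossing F A B := [set f in F | ~~ (f \subset A) & ~~ (f \subset B)].

Definition draws_meeting r X U :=
  [set e : {set V} | e \subset U & #|e| == r] :\:
  [set e : {set V} | e \subset U :\: X & #|e| == r].

Lemma card_induced_crossing F A B :
  (forall f, f \in F -> ~~ (f \subset A :&: B)) ->
  #|F| = #|induced F A| + #|induced F B| + #|crossing F A B|.
Proof.
move=> noAB; have splitF : F = induced F A :|: induced F B :|: crossing F A B.
  by apply/setP => f; rewrite !inE; case: (f \in F); case: (f \subset A); case: (f \subset B).
rewrite {1}splitF !cardsU_disjoint // -setI_eq0; apply/eqP/setP => f; rewrite !inE.
  case fF: (f \in F) => //=; apply/negbTE/negP => /andP [fA fB].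
  by move: (noAB f fF); rewrite subsetI fA fB.
by case: (f \subset A); case: (f \subset B); rewrite ?andbF.
Qed.

Lemma card_draws_meeting r X U :
  X \subset U -> #|draws_meeting r X U| = 'C(#|U|, r) - 'C(#|U| - #|X|, r).
Proof.
move=> sXU; rewrite cardsDS ?cards_draws ?cardsDS //.
by apply/subsetP => e; rewrite !inE => /andP [/subset_trans -> //]; apply: subsetDl.
Qed.

Lemma induced_draws_meeting r X U U' :
  U' \subset U -> induced (draws_meeting r X U) U' = draws_meeting r X U'.
Proof.
move=> sU'U; apply/setP => e; rewrite !inE !subsetD.
by case eU': (e \subset U'); rewrite ?andbF ?andbT //= (subset_trans eU' sU'U).
Qed.

End Families.

Section Separations.
Variable V : finType.
Implicit Types (W X Y P Q : {set V}) (E : {set {set V}}) (e f : {set V}) (H : hgraph V).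

Record separation W E X P Q : Prop := Separation {
  sep_cover : X :|: P :|: Q = W;
  sep_XP : [disjoint X & P];
  sep_XQ : [disjoint X & Q];
  sep_PQ : [disjoint P & Q];
  sep_P0 : P != set0;
  sep_Q0 : Q != set0;
  sep_edges : forall f, f \in E -> [disjoint f & X] -> f \subset P \/ f \subset Q }.

Lemma separation_sym W E X P Q : separation W E X P Q -> separation W E X Q P.
Proof.
case=> cover dXP dXQ dPQ P0 Q0 edges; split=> //; first by rewrite setUAC.
  by rewrite disjoint_sym.
by move=> f fE fX; case: (edges f fE fX); [right | left].
Qed.

Lemma separation_side_proper W E X P Q : separation W E X P Q -> X :|: P \proper W.
Proof.
case=> <- _ dXQ dPQ _ /set0Pn [v vQ] _; apply: properUl; apply/subsetPn; exists v => //.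
by rewrite inE (disjointFl dXQ vQ) (disjointFl dPQ vQ).
Qed.

Lemma separation_of_cut W E X :
  (forall f, f \in E -> f \subset W) -> X \subset W -> ~ connected (del_verts (W, E) X) ->
  exists P Q, separation W E X P Q.
Proof.
move=> EW sXW disconnected; set G := del_verts (W, E) X.
have [u [v [uG vG no_uv]]] : exists u v, [/\ u \in W :\: X, v \in W :\: X & ~ hpath G u v].
  apply: NNPP => no_pair; apply: disconnected => u v uG vG.
  by apply: NNPP => no_uv; apply: no_pair; exists u, v.
pose P := [set w in W :\: X | asbool (hpath G u w)].
have memP w : w \in P = [&& w \notin X, w \in W & asbool (hpath G u w)] by rewrite !inE andbA.
have uP : u \in P by rewrite inE uG; apply/asboolP/hpath_refl.
have vP : v \notin P by rewrite memP; apply/negP => /and3P [_ _ /asboolP].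
clearbody P; exists P, ((W :\: X) :\: P); split.
- apply/setP => w; rewrite !inE memP.
  case: (boolP (w \in X)) => [/(subsetP sXW) -> | _]; rewrite ?orbT //=.
  by case: (w \in W); case: asbool.
- by rewrite -setI_eq0; apply/eqP/setP => w; rewrite !inE memP; case: (w \in X); rewrite ?andbF.
- by rewrite -setI_eq0; apply/eqP/setP => w; rewrite !inE; case: (w \in X); rewrite ?andbF.
- by rewrite -setI_eq0; apply/eqP/setP => w; rewrite !inE; case: (w \in P); rewrite ?andbF.
- by apply/set0Pn; exists u.
- by apply/set0Pn; exists v; rewrite !inE vP; move: vG; rewrite inE.
move=> f fE dfX.
have fG : f \in hedges G by rewrite /G /hedges /= inE fE subsetD EW.
have [x /andP [xf xP] | noP] := pickP [pred x | (x \in f) && (x \in P)].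
  left; apply/subsetP => y yf.
  move: xP; rewrite !memP (disjointFr dfX yf) (subsetP (EW f fE) y yf).
  by case/and3P => _ _ /asboolP ux; apply/asboolP; apply: hpath_add ux fG xf yf.
right; apply/subsetP => y yf; have := noP y; rewrite /= yf /= => yP.
by rewrite !inE yP (disjointFr dfX yf) (subsetP (EW f fE) y yf).
Qed.

Lemma separation_grow W E X Y P Q :
  separation W E X P Q -> X \subset Y -> Y \subset W -> P :\: Y != set0 -> Q :\: Y != set0 ->
  separation W E Y (P :\: Y) (Q :\: Y).
Proof.
case=> <- dXP dXQ dPQ _ _ edges sXY sYW P0 Q0; split=> //.
- apply/setP => w; have := subsetP sXY w; have := subsetP sYW w; rewrite !inE.
  by case: (w \in Y); case: (w \in X) => //=; [move=> /(_ isT) -> | move=> _ /(_ isT)].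
- by rewrite -setI_eq0; apply/eqP/setP => w; rewrite !inE; case: (w \in Y).
- by rewrite -setI_eq0; apply/eqP/setP => w; rewrite !inE; case: (w \in Y).
- by apply: disjointW dPQ; apply: subsetDl.
move=> f fE dfY; rewrite !subsetD dfY !andbT.
by apply: edges fE _; apply: disjointWr sXY dfY.
Qed.

Lemma separation_mem W E X P Q x :
  separation W E X P Q -> x \in W -> x \notin X :|: Q -> x \in P.
Proof.
by case=> <- _ _ _ _ _ _; rewrite !inE; case: (x \in X); case: (x \in P); case: (x \in Q).
Qed.

Lemma kappa_le_separation W E X P Q e H u v :
  separation W E X P Q -> subhg H (W, e |: E) ->
  ([disjoint e & X] -> e \subset P \/ e \subset Q) ->
  u \in hverts H -> u \in P -> v \in hverts H -> v \in Q -> kappa H <= #|X|.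
Proof.
case=> _ dXP dXQ dPQ _ _ edges [_ _ sHE] sep_e.
apply: kappa_le_separator dXP dXQ dPQ _ => f /(subsetP sHE); rewrite !inE.
by case/orP => [/eqP -> // | /edges].
Qed.

End Separations.

Section VertexMaximal.
Variables (V : finType) (r k : nat).
Implicit Types (W X P Q U : {set V}) (E : {set {set V}}) (e f : {set V}) (H : hgraph V).

Definition uniform_on W E : Prop := forall e, e \in E -> #|e| = r /\ e \subset W.

Lemma uniform_on_hgraph W E : 0 < r -> uniform_on W E -> is_hgraph (W, E).
Proof.
move=> r_gt0 unifE e /unifE [er eW]; split=> //.
by apply/eqP => e0; move: r_gt0; rewrite -er e0 cards0.
Qed.

Lemma subhg_refl H : is_hgraph H -> subhg H H.
Proof. by split. Qed.

Lemma subhg_trans H1 H2 H3 : subhg H1 H2 -> subhg H2 H3 -> subhg H1 H3.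
Proof.
by case=> ? sV12 sE12 [_ sV23 sE23]; split; rewrite ?(subset_trans sV12) ?(subset_trans sE12).
Qed.

Lemma subhg_add_edge W E e H : subhg H (W, e |: E) -> e \notin hedges H -> subhg H (W, E).
Proof.
case=> Hg sHW sHE eH; split=> //; apply/subsetP => f fH.
by move: (subsetP sHE f fH); rewrite !inE; case: eqP => [ef | //]; move: eH; rewrite -ef fH.
Qed.

Section Maximal.
Variables (W : {set V}) (E : {set {set V}}).
Hypotheses (k_lt_r : k < r) (unifE : uniform_on W E) (maxE : vertex_k_maximal r k (W, E)).

Let r_gt0 : 0 < r. Proof. exact: leq_ltn_trans (leq0n k) k_lt_r. Qed.

Lemma kappa_le_k H : subhg H (W, E) -> kappa H <= k.
Proof. by move=> subH; apply: leq_trans maxE.1; apply: kappa_le_bar. Qed.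

Lemma maximal_add_edge e : #|e| = r -> e \subset W -> e \notin E ->
  exists2 H, subhg H (W, e |: E) & e \in hedges H /\ k < kappa H.
Proof.
move=> er eW eE; have [H subH lt_k] := kappa_bar_gt_sub (maxE.2 e er eW eE).
exists H => //; split=> //; apply: contraTT lt_k => eH.
by rewrite -leqNgt; apply: kappa_le_k (subhg_add_edge subH eH).
Qed.

Lemma rset_not_subset X e : #|X| = k -> #|e| = r -> ~~ (e \subset X).
Proof. by move=> cardX er; apply/negP => /subset_leq_card; rewrite cardX er leqNgt k_lt_r. Qed.

(* In a subhypergraph [H'] of [H + e] on more than [k + 1] vertices, any
   [|V(H')| - k] vertices are too few to contain an edge, so the other [k]
   vertices form a vertex cut of [H']. *)
Lemma maximal_complete : #|W| - k < r -> E = [set e : {set V} | e \subset W & #|e| == r].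
Proof.
move=> small; apply/setP => e; rewrite inE.
apply/idP/andP => [/unifE [-> ->] // | [eW /eqP er]].
apply: contraT => eE; have [H subH [eH lt_k]] := maximal_add_edge er eW eE.
have [_ sHW sHE] := subH; have le_HW : #|hverts H| <= #|W| := subset_leq_card sHW.
case: (leqP #|hverts H| k.+1) => [smallH | bigH].
  by have := kappa_le_card H; lia.
have [Z sZH cardZ] := exists_subset_card (leq_subr k #|hverts H|).
have edge_free f : f \in hedges H -> ~~ (f \subset Z).
  move=> /(subsetP sHE); rewrite !inE => /orP [/eqP -> | /unifE [fr _]];
    apply/negP => /subset_leq_card; lia.
have := kappa_le_edge_free sZH _ edge_free; lia.
Qed.

Lemma exists_separation : 0 < k -> r <= #|W| - k ->
  exists X P Q, #|X| = k /\ separation W E X P Q.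
Proof.
move=> k_gt0 big; have EW f : f \in E -> f \subset W by case/unifE.
have [X0 [sX0W disc] le_X0] : exists2 X0, vertex_cut (W, E) X0 & #|X0| <= k.
  apply: exists_small_cut; last by rewrite /hverts /=; lia.
  by apply/kappa_le_k/subhg_refl/uniform_on_hgraph.
have [P0 [Q0 sep0]] := separation_of_cut EW sX0W disc.
have [u uP0] := set0Pn _ (sep_P0 sep0); have [v vQ0] := set0Pn _ (sep_Q0 sep0).
have uvW : [set u; v] \subset W.
  by rewrite -(sep_cover sep0) subUset !sub1set !inE uP0 vQ0 !orbT.
have [D sD cardD] : exists2 D : {set V}, D \subset W :\: (X0 :|: [set u; v]) & #|D| = k - #|X0|.
  apply: exists_subset_card; rewrite cardsDS; last by rewrite subUset sX0W.
  have : #|[set u; v]| <= 2 by rewrite cards2; case: (u != v).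
  have := leq_card_setU X0 [set u; v]; case=> le_U _; lia.
have notD x : x \in [set u; v] -> x \notin D.
  by move=> xuv; apply/negP => /(subsetP sD); rewrite inE in_setU xuv orbT.
exists (X0 :|: D), (P0 :\: (X0 :|: D)), (Q0 :\: (X0 :|: D)); split.
  rewrite cardsU_disjoint; first lia.
  by move: sD; rewrite subsetD disjoint_sym => /andP [_]; apply: disjointWl; apply: subsetUl.
apply: (separation_grow sep0 (subsetUl _ _)).
- by rewrite subUset sX0W (subset_trans sD (subsetDl _ _)).
- apply/set0Pn; exists u; rewrite !inE uP0 (disjointFl (sep_XP sep0) uP0).
  by rewrite (negbTE (notD u _)) ?inE ?eqxx.
- apply/set0Pn; exists v; rewrite !inE vQ0 (disjointFl (sep_XQ sep0) vQ0).
  by rewrite (negbTE (notD v _)) ?inE ?eqxx ?orbT.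
Qed.

Section Separated.
Variables (X P Q : {set V}).
Hypotheses (cardX : #|X| = k) (sep : separation W E X P Q).

Lemma separation_side_maximal :
  uniform_on (X :|: P) (induced E (X :|: P)) /\
  vertex_k_maximal r k (X :|: P, induced E (X :|: P)).
Proof.
set U := X :|: P; set EU := induced E U.
have sUW : U \subset W by rewrite -(sep_cover sep) subsetUl.
have unifU : uniform_on U EU by move=> f; rewrite inE => /andP [/unifE [-> _] ->].
have subU : subhg (U, EU) (W, E).
  split; [exact: uniform_on_hgraph | exact: sUW |].
  by apply/subsetP => f; rewrite inE => /andP [].
split=> //; split.
  by apply/bigmax_leqP => H /asboolP subH; apply: kappa_le_k (subhg_trans subH subU).
move=> e er eU eEU.
have eE : e \notin E by apply: contra eEU => eE; rewrite /hedges /= inE eE eU.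
have [H subH [eH lt_k]] := maximal_add_edge er (subset_trans eU sUW) eE.
have [Hg sHW sHE] := subH; have eVH := (Hg e eH).2.
have sHU : hverts H \subset U.
  apply/subsetP => v vH; apply: contraT => vU.
  have [u ue uX] := subsetPn (rset_not_subset cardX er).
  have uP : u \in P by move: (subsetP eU u ue); rewrite inE (negbTE uX).
  have vQ : v \in Q.
    exact: separation_mem (separation_sym sep) (subsetP sHW v vH) vU.
  have e_sep : [disjoint e & X] -> e \subset P \/ e \subset Q.
    move=> deX; left; apply/subsetP => x xe.
    by move: (subsetP eU x xe); rewrite inE (disjointFr deX xe).
  have := kappa_le_separation sep subH e_sep (subsetP eVH u ue) uP vH vQ.
  by rewrite cardX leqNgt lt_k.
apply: leq_trans lt_k (kappa_le_bar _); split=> //.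
apply/subsetP => f fH; move: (subsetP sHE f fH); rewrite !inE => /orP [-> // | fE].
by rewrite fE (subset_trans (Hg f fH).2 sHU) orbT.
Qed.

Lemma crossing_edge e :
  e \subset W -> #|e| = r -> ~~ [disjoint e & X] ->
  ~~ (e \subset X :|: P) -> ~~ (e \subset X :|: Q) -> e \in E.
Proof.
move=> eW er meetX eXP eXQ; apply: contraT => eE.
have [H subH [eH lt_k]] := maximal_add_edge er eW eE.
have [Hg _ _] := subH; have eVH := (Hg e eH).2.
have [u ue uXQ] := subsetPn eXQ; have [v ve vXP] := subsetPn eXP.
have uP := separation_mem sep (subsetP eW u ue) uXQ.
have vQ := separation_mem (separation_sym sep) (subsetP eW v ve) vXP.
have e_sep : [disjoint e & X] -> e \subset P \/ e \subset Q.
  by move=> deX; move: meetX; rewrite deX.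
have := kappa_le_separation sep subH e_sep (subsetP eVH u ue) uP (subsetP eVH v ve) vQ.
by rewrite cardX leqNgt lt_k.
Qed.

Lemma crossing_maximal :
  crossing E (X :|: P) (X :|: Q) = crossing (draws_meeting r X W) (X :|: P) (X :|: Q).
Proof.
apply/setP => e; rewrite !inE subsetD.
case eXP: (e \subset X :|: P); case eXQ: (e \subset X :|: Q); rewrite ?andbF ?andbT //=.
apply/idP/idP => [eE | /and3P [meetX eW /eqP er]].
  have [er eW] := unifE eE; rewrite eW er eqxx /= !andbT.
  apply/negP => deX; case: (sep_edges sep eE deX) => s.
    by move: eXP; rewrite (subset_trans s (subsetUr _ _)).
  by move: eXQ; rewrite (subset_trans s (subsetUr _ _)).
rewrite eW er eqxx andbT /= in meetX.
by apply: crossing_edge; rewrite ?eXP ?eXQ.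
Qed.

Lemma card_separated :
  #|induced E (X :|: P)| = #|draws_meeting r X (X :|: P)| ->
  #|induced E (X :|: Q)| = #|draws_meeting r X (X :|: Q)| ->
  #|E| = #|draws_meeting r X W|.
Proof.
move=> cardP cardQ.
have noX (F : {set {set V}}) :
    {in F, forall f, #|f| = r} -> forall f, f \in F -> ~~ (f \subset (X :|: P) :&: (X :|: Q)).
  by move=> Fr f /Fr fr; rewrite -setUIr (disjoint_setI0 (sep_PQ sep)) setU0 rset_not_subset.
have sXPW : X :|: P \subset W by rewrite -(sep_cover sep) subsetUl.
have sXQW : X :|: Q \subset W by rewrite -(sep_cover (separation_sym sep)) subsetUl.
rewrite (card_induced_crossing (noX E _)); last by move=> f /unifE [].
rewrite (card_induced_crossing (noX (draws_meeting r X W) _)); last first.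
  by move=> f; rewrite !inE => /andP [_ /andP [_ /eqP]].
by rewrite !induced_draws_meeting // crossing_maximal cardP cardQ.
Qed.

End Separated.

End Maximal.

Lemma card_vertex_k_maximal W E :
  0 < k -> k < r -> uniform_on W E -> vertex_k_maximal r k (W, E) ->
  #|E| = 'C(#|W|, r) - 'C(#|W| - k, r).
Proof.
move=> k_gt0 k_lt_r; have [n] := ubnP #|W|.
elim: n W E => // n IHn W E ltWn unifE maxE.
have [small | big] := ltnP (#|W| - k) r.
  by rewrite (maximal_complete k_lt_r unifE maxE small) cards_draws (bin_small small) subn0.
have [X [P [Q [cardX sep]]]] := exists_separation k_lt_r unifE maxE k_gt0 big.
have side P' Q' : separation W E X P' Q' ->
    #|induced E (X :|: P')| = #|draws_meeting r X (X :|: P')|.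
  move=> sep'; have [unif' max'] := separation_side_maximal k_lt_r unifE maxE cardX sep'.
  have lt' : #|X :|: P'| < n := leq_trans (proper_card (separation_side_proper sep')) ltWn.
  by rewrite (IHn _ _ lt' unif' max') card_draws_meeting ?subsetUl ?cardX.
rewrite (card_separated k_lt_r unifE maxE cardX sep (side _ _ sep) (side _ _ (separation_sym sep))).
by rewrite card_draws_meeting ?cardX // -(sep_cover sep) -setUA subsetUl.
Qed.

End VertexMaximal.

Theorem corollary4p3 (n k r : nat) (V : finType) (E : {set {set V}}) :
  2 <= k -> 2 <= r -> 2 * k <= n -> k < r ->
  #|V| = n ->
  uniform r ([set: V], E) ->
  vertex_k_maximal r k ([set: V], E) ->
  #|E| = 'C(n, r) - 'C(n - k, r).
Proof.
move=> k_ge2 _ _ k_lt_r cardV unifE maxE; rewrite -cardV -cardsT.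
apply: card_vertex_k_maximal (ltnW k_ge2) k_lt_r _ maxE => e eE.
by split; [exact: unifE | exact: subsetT].
Qed.
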